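(* Let $\epsilon,r>0$. Then there exist a sponsored search setting (numbers of agents $n$ and slots $k\le n$), $\alpha\in\mathbb{R}^n_{>}$ and $\theta\in\Theta^\alpha$ such that $R(\theta)\ge r$ and $\alpha$-VCG has a Nash equilibrium (for $\theta$) with revenue at most $\epsilon$. Similarly, there exist such a setting, $\alpha\in\mathbb{R}^n_{>}$ and $\theta\in\Theta^\alpha$ such that $R(\theta)\ge r$ and $\alpha$-GSP has a Nash equilibrium (for $\theta$) with revenue at most $\epsilon$.
   Context: Sponsored search setting: a set $N=\{1,\dots,n\}$ of agents and $k\le n$ slots. An outcome assigns the agents to distinct positions in $\{1,\dots,n\}$; position $j\le k$ means receiving slot $j$, positions $>k$ mean receiving nothing (value $0$). Utilities are quasilinear. $\mathbb{R}^n_{>}$ is the set of vectors $\alpha$ with $1=\alpha_1>\alpha_2>\dots>\alpha_k>0$ and $\alpha_j=0$ for $j>k$ (set $\alpha_{n+1}=0$). For $\alpha\in\mathbb{R}^n_{>}$, $\Theta^\alpha$ is the set of type profiles in which each agent $i$ has a value $v_i(\theta_i)\ge0$ and values slot $j$ at $\alpha_j v_i(\theta_i)$. VCG: agents report bids $x_{i,j}$ for each slot; an assignment maximizing total bid is chosen and each agent pays the Clarke payment. The VCG outcome for $\theta$ is the result of VCG under truthful bids $x_{i,j}=$ true value of $i$ for slot $j$; $R(\theta)$ is its revenue (sum of payments). $\alpha$-GSP and $\alpha$-VCG: each agent submits a single $b_i\ge 0$, interpreted as bid $\alpha_j b_i$ on slot $j$. Agents are ranked by $b_i$ (ties arbitrary);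 the agent of rank $j\le k$ gets slot $j$. Writing $b_{(l)}$ for the $l$-th highest submitted value ($0$ if $l>n$): in $\alpha$-GSP the rank-$j$ agent pays $\alpha_j b_{(j+1)}$; in $\alpha$-VCG (the VCG mechanism applied to these bid vectors) it pays $\sum_{l=j}^{k}(\alpha_l-\alpha_{l+1})b_{(l+1)}$. Revenue is the sum of payments. A Nash equilibrium (for a given type profile, complete information) is a profile of submitted numbers from which no agent can strictly gain by unilaterally changing its number. *)

From HB Require Import structures.
From mathcomp Require Import all_boot all_order all_algebra all_fingroup.
From mathcomp Require Import reals.
Set Implicit Arguments. Unset Strict Implicit. Unset Printing Implicit Defensive.
Import Order.TTheory GRing.Theory Num.Theory.
Local Open Scope ring_scope.

(* Conventions: agents are 'I_n; positions are 0-based ranks 0..n-1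
   (0-based position p = paper's position p+1).  alpha p = paper's alpha_{p+1};
   alpha p = 0 for p >= k (so alpha_{n+1} = 0 as well). *)

Definition alpha_ok (R : realType) (n k : nat) (alpha : nat -> R) : Prop :=
  [/\ (0 < k <= n)%N,
      alpha 0%N = 1,
      (forall p : nat, (p.+1 < k)%N -> alpha p.+1 < alpha p),
      0 < alpha k.-1
    & (forall p : nat, (k <= p)%N -> alpha p = 0)].

(* theta \in Theta^alpha: nonnegative values v_i; agent i values position p
   at alpha p * v i. *)
Definition types_ok (R : realType) (n : nat) (v : 'I_n -> R) : Prop :=
  forall i, 0 <= v i.

Definition welfare (R : realType) (n : nat) (alpha : nat -> R) (v : 'I_n -> R)
  (s : {perm 'I_n}) : R := \sum_(i : 'I_n) alpha (s i) * v i.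

Definition welfare_without (R : realType) (n : nat) (alpha : nat -> R)
  (v : 'I_n -> R) (i : 'I_n) (s : {perm 'I_n}) : R :=
  \sum_(j : 'I_n | j != i) alpha (s j) * v j.

(* maximal welfare of the other agents when i is absent (all summands >= 0,
   so 0 is a harmless neutral element for max) *)
Definition opt_welfare_without (R : realType) (n : nat) (alpha : nat -> R)
  (v : 'I_n -> R) (i : 'I_n) : R :=
  \big[Num.max/0]_(s : {perm 'I_n}) welfare_without alpha v i s.

Definition vcg_optimal (R : realType) (n : nat) (alpha : nat -> R)
  (v : 'I_n -> R) (s : {perm 'I_n}) : Prop :=
  forall t : {perm 'I_n}, welfare alpha v t <= welfare alpha v s.

Definition clarke_payment (R : realType) (n : nat) (alpha : nat -> R)
  (v : 'I_n -> R) (s : {perm 'I_n}) (i : 'I_n) : R :=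
  opt_welfare_without alpha v i - welfare_without alpha v i s.

Definition vcg_revenue (R : realType) (n : nat) (alpha : nat -> R)
  (v : 'I_n -> R) (s : {perm 'I_n}) : R :=
  \sum_(i : 'I_n) clarke_payment alpha v s i.

Definition consistent_ranking (R : realType) (n : nat) (b : 'I_n -> R)
  (rho : {perm 'I_n}) : Prop :=
  forall i j : 'I_n, b j < b i -> (rho i < rho j)%N.

(* b_(m+1): the (m+1)-th highest submitted number (0-based m), 0 if m >= n *)
Definition nth_bid (R : realType) (n : nat) (b : 'I_n -> R)
  (rho : {perm 'I_n}) (m : nat) : R :=
  oapp (fun p : 'I_n => b ((rho^-1)%g p)) 0 (insub m).

(* alpha-GSP: rank (p+1) agent pays alpha_{p+1} b_(p+2) (0 when p >= k) *)
Definition gsp_pay (R : realType) (n k : nat) (alpha : nat -> R)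
  (b : 'I_n -> R) (rho : {perm 'I_n}) (i : 'I_n) : R :=
  alpha (rho i) * nth_bid b rho (rho i).+1.

(* alpha-VCG: rank j=p+1 agent pays sum_{l=j}^{k} (alpha_l - alpha_{l+1}) b_(l+1) *)
Definition avcg_pay (R : realType) (n k : nat) (alpha : nat -> R)
  (b : 'I_n -> R) (rho : {perm 'I_n}) (i : 'I_n) : R :=
  \sum_(rho i <= l < k) (alpha l - alpha l.+1) * nth_bid b rho l.+1.

Definition utility (R : realType) (n : nat) (alpha : nat -> R) (v : 'I_n -> R)
  (pay : ('I_n -> R) -> {perm 'I_n} -> 'I_n -> R)
  (b : 'I_n -> R) (rho : {perm 'I_n}) (i : 'I_n) : R :=
  alpha (rho i) * v i - pay b rho i.

Definition mech_revenue (R : realType) (n : nat)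
  (pay : ('I_n -> R) -> {perm 'I_n} -> 'I_n -> R)
  (b : 'I_n -> R) (rho : {perm 'I_n}) : R :=
  \sum_(i : 'I_n) pay b rho i.

Definition deviate (R : realType) (n : nat) (b : 'I_n -> R) (i : 'I_n) (x : R)
  : 'I_n -> R := fun j => if j == i then x else b j.

(* Nash equilibrium, valid for every (arbitrary) tie-breaking rule:
   for any ranking consistent with b and any ranking consistent with a
   unilateral deviation, the deviating agent does not strictly gain. *)
Definition is_nash (R : realType) (n : nat) (alpha : nat -> R) (v : 'I_n -> R)
  (pay : ('I_n -> R) -> {perm 'I_n} -> 'I_n -> R) (b : 'I_n -> R) : Prop :=
  (forall i, 0 <= b i) /\
  forall rho : {perm 'I_n}, consistent_ranking b rho ->
  forall (i : 'I_n) (x : R), 0 <= x -> x != b i ->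
  forall rho' : {perm 'I_n}, consistent_ranking (deviate b i x) rho' ->
    utility alpha v pay (deviate b i x) rho' i <= utility alpha v pay b rho i.

From HB Require Import structures.
From mathcomp Require Import all_boot all_order all_algebra all_fingroup.
From mathcomp Require Import reals.
Import Order.TTheory GRing.Theory Num.Theory.
Local Open Scope ring_scope.

(* Two agents, both of value r, compete for a single slot, alpha = (1, 0).
   Truthful VCG charges the winner the loser's value r.  With a single slot,
   alpha-VCG and alpha-GSP both charge the winner the other agent's bid, and
   the bids (r, 0) are a Nash equilibrium of revenue 0: the winner already
   pays nothing, and the loser could only win by paying r, its own value. *)

Definition other (i : 'I_2) : 'I_2 := if i == ord0 then ord_max else ord0.

Lemma other_neq (i : 'I_2) : other i != i.
Proof. by case: i => [[|[|m]] Hi]. Qed.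

Lemma ord2_neq_other (i j : 'I_2) : j != i -> j = other i.
Proof.
by case: i j => [[|[|m]] Hi] // [[|[|m']] Hj] // _; apply: val_inj.
Qed.

Section OneSlot.
Variable R : realType.

Definition one_slot (p : nat) : R := if p == 0%N then 1 else 0.

Lemma one_slot_ok : alpha_ok 2 1 one_slot.
Proof. by split=> // -[]. Qed.

Lemma sum_one_slot_perm (s : {perm 'I_2}) : \sum_(i : 'I_2) one_slot (s i) = 1.
Proof.
rewrite (reindex_inj (@perm_inj _ s^-1)%g) /=.
under eq_bigr do rewrite permKV.
by rewrite big_ord_recr big_ord1 /one_slot /= addr0.
Qed.

Section ConstantValue.
Variable r : R.
Hypothesis r_ge0 : 0 <= r.

Lemma welfare_const (s : {perm 'I_2}) : welfare one_slot (fun _ => r) s = r.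
Proof. by rewrite /welfare -big_distrl /= sum_one_slot_perm mul1r. Qed.

Lemma welfare_without_const (i : 'I_2) (s : {perm 'I_2}) :
  welfare_without one_slot (fun _ => r) i s = r - one_slot (s i) * r.
Proof.
rewrite -{2}(welfare_const s) /welfare (bigD1 i) //=.
by rewrite /welfare_without addrC addrK.
Qed.

(* The optimum without i places the remaining agent in the slot. *)
Lemma opt_welfare_without_const (i : 'I_2) :
  opt_welfare_without one_slot (fun _ => r) i = r.
Proof.
apply/eqP; rewrite eq_le; apply/andP; split.
  apply/bigmax_leP; split=> // t _.
  rewrite welfare_without_const gerBl mulr_ge0 //.
  by rewrite /one_slot; case: eqP.
have := le_bigmax 0 (welfare_without one_slot (fun _ => r) i) (tperm i ord_max).
by rewrite welfare_without_const tpermL /one_slot /= mul0r subr0.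
Qed.

Lemma vcg_revenue_const (s : {perm 'I_2}) : vcg_revenue one_slot (fun _ => r) s = r.
Proof.
rewrite /vcg_revenue /clarke_payment.
under eq_bigr do rewrite opt_welfare_without_const welfare_without_const subKr.
by rewrite -big_distrl /= sum_one_slot_perm mul1r.
Qed.

End ConstantValue.

Section SingleSlotMechanism.
Variables (r : R) (pay : ('I_2 -> R) -> {perm 'I_2} -> 'I_2 -> R).
Hypothesis r_gt0 : 0 < r.
Hypothesis payE :
  forall c rho i, pay c rho i = one_slot (rho i) * nth_bid c rho (rho i).+1.

Lemma pay_one_slot c rho i :
  pay c rho i = if rho i == ord0 then c (other i) else 0.
Proof.
rewrite payE /one_slot -[_ == 0%N]/(rho i == ord0).
case: eqP => [rhoi0 | _]; last by rewrite mul0r.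
rewrite mul1r rhoi0 /nth_bid insubT //=.
set j := (rho^-1)%g _; suff -> : j = other i by [].
apply: ord2_neq_other; apply/eqP => /(congr1 rho).
by rewrite /j permKV rhoi0 => /(congr1 val).
Qed.

Lemma utility_one_slot c rho i :
  utility one_slot (fun _ => r) pay c rho i
  = if rho i == ord0 then r - c (other i) else 0.
Proof.
rewrite /utility pay_one_slot /one_slot -[_ == 0%N]/(rho i == ord0).
by case: eqP; rewrite ?mul1r ?mul0r ?subr0.
Qed.

Lemma utility_le_max c rho i :
  utility one_slot (fun _ => r) pay c rho i <= Num.max 0 (r - c (other i)).
Proof. by rewrite utility_one_slot; case: eqP; rewrite le_max lexx ?orbT. Qed.

Definition value_zero_bids (i : 'I_2) : R := if i == ord0 then r else 0.

Lemma value_zero_ranking rho :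
  consistent_ranking value_zero_bids rho -> rho ord0 = ord0.
Proof.
move=> /(_ ord0 ord_max); rewrite /value_zero_bids /= r_gt0 => /(_ isT) lt_rho.
apply/val_inj/eqP; rewrite /= -leqn0.
exact: leq_ltn_trans lt_rho (ltn_ord _).
Qed.

Lemma value_zero_utility rho i : consistent_ranking value_zero_bids rho ->
  utility one_slot (fun _ => r) pay value_zero_bids rho i
  = Num.max 0 (r - value_zero_bids (other i)).
Proof.
move=> /value_zero_ranking rho0.
rewrite utility_one_slot -[in rho i == _]rho0 (inj_eq perm_inj).
case: i => [[|[|m]] Hi] //=; rewrite /value_zero_bids /=.
  by rewrite subr0 max_r // ltW.
by rewrite subrr maxxx.
Qed.

Lemma value_zero_nash : is_nash one_slot (fun _ => r) pay value_zero_bids.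
Proof.
split=> [i | rho rhoP i x _ _ rho' _].
  by rewrite /value_zero_bids; case: eqP => // _; apply: ltW.
rewrite value_zero_utility //; apply: le_trans (utility_le_max _ _ _) _.
by rewrite /deviate (negPf (other_neq i)).
Qed.

Lemma value_zero_revenue rho : consistent_ranking value_zero_bids rho ->
  mech_revenue pay value_zero_bids rho = 0.
Proof.
move=> /value_zero_ranking rho0; apply: big1 => i _.
by rewrite pay_one_slot -[in rho i == _]rho0 (inj_eq perm_inj); case: eqP => [-> |].
Qed.

End SingleSlotMechanism.

Lemma low_revenue_equilibrium
    (mech : forall n, nat -> (nat -> R) -> ('I_n -> R) -> {perm 'I_n} -> 'I_n -> R)
    (eps r : R) :
  (forall c rho i, mech 2%N 1%N one_slot c rho i
                   = one_slot (rho i) * nth_bid c rho (rho i).+1) ->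
  0 < eps -> 0 < r ->
  exists (n k : nat) (alpha : nat -> R) (v : 'I_n -> R),
     [/\ alpha_ok n k alpha, types_ok v,
         (forall s : {perm 'I_n}, vcg_optimal alpha v s -> r <= vcg_revenue alpha v s)
       & exists b : 'I_n -> R,
           is_nash alpha v (mech n k alpha) b /\
           (forall rho : {perm 'I_n}, consistent_ranking b rho ->
              mech_revenue (mech n k alpha) b rho <= eps)].
Proof.
move=> payE eps_gt0 r_gt0.
exists 2%N, 1%N, one_slot, (fun _ => r); split.
- exact: one_slot_ok.
- by move=> _; apply: ltW.
- by move=> s _; rewrite vcg_revenue_const // ltW.
- exists (value_zero_bids r); split; first exact: value_zero_nash.
  by move=> rho rhoP; rewrite value_zero_revenue // ltW.
Qed.

Lemma avcg_pay_one_slot c (rho : {perm 'I_2}) i :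
  avcg_pay 1 one_slot c rho i
  = one_slot (rho i) * nth_bid c rho (rho i).+1.
Proof.
rewrite /avcg_pay /one_slot; case: eqP => [-> | ].
  by rewrite big_nat1 /= subr0.
by case: (rho i) => [[|[|m]] ?] //= _; rewrite big_geq // mul0r.
Qed.

End OneSlot.

Theorem theorem1 (R : realType) (eps r : R) :
  0 < eps -> 0 < r ->
  (exists (n k : nat) (alpha : nat -> R) (v : 'I_n -> R),
     [/\ alpha_ok n k alpha, types_ok v,
         (forall s : {perm 'I_n}, vcg_optimal alpha v s -> r <= vcg_revenue alpha v s)
       & exists b : 'I_n -> R,
           is_nash alpha v (avcg_pay k alpha) b /\
           (forall rho : {perm 'I_n}, consistent_ranking b rho ->
              mech_revenue (avcg_pay k alpha) b rho <= eps)])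
  /\
  (exists (n k : nat) (alpha : nat -> R) (v : 'I_n -> R),
     [/\ alpha_ok n k alpha, types_ok v,
         (forall s : {perm 'I_n}, vcg_optimal alpha v s -> r <= vcg_revenue alpha v s)
       & exists b : 'I_n -> R,
           is_nash alpha v (gsp_pay k alpha) b /\
           (forall rho : {perm 'I_n}, consistent_ranking b rho ->
              mech_revenue (gsp_pay k alpha) b rho <= eps)]).
Proof.
move=> eps_gt0 r_gt0; split.
- exact: low_revenue_equilibrium (@avcg_pay_one_slot R) eps_gt0 r_gt0.
- exact: (@low_revenue_equilibrium R (@gsp_pay R)) (fun _ _ _ => erefl) eps_gt0 r_gt0.
Qed.
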